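(* Let $I\subset\mathbb{R}$ be an open interval, $\lambda:I\to\mathbb{R}$ a non-constant positive smooth function, and fix a sign $\pm$. For $c\in I$, let $f_c:\mathbb{R}^2\to\tilde M(1-\lambda^2,2(1\pm\lambda))$, $f_c(x,y)=(x,y,c)$, with $\mathbb{R}^2$ carrying the induced metric (so $f_c$ is an anti-invariant isometric immersion with unit normal $e_3$). Then $f_c$ is proper biharmonic if and only if $\lambda'(c)\neq0$ and $$\Big(\lambda\lambda''-2(\lambda')^2-8\lambda^2(1\pm\lambda)^2\Big)\Big|_{z=c}=0,$$ with the sign $\pm$ the same as in $\tilde M(1-\lambda^2,2(1\pm\lambda))$.
   Context: Definition of $\tilde M(1-\lambda^2,2(1\pm\lambda))$: Let $\lambda:I\to\mathbb{R}$ be a non-constant positive smooth function on an open interval $I$, $\lambda'=d\lambda/dz$. On $\tilde M^3=\mathbb{R}^2\times I\subset\mathbb{R}^3$ with coordinates $(x,y,z)$ consider the vector fields $e_1=\partial_x$, $e_2=\partial_y$, $e_3=(\pm 2y+f(z))\partial_x+\big(2\lambda x-\frac{\lambda'}{2\lambda}y+h(z)\big)\partial_y+\partial_z$, where $f,h$ are arbitrary smooth functions of $z$. Let $g$ be the Riemannian metric with $g(e_i,e_j)=\delta_{ij}$, $\xi=e_1$, $\eta$ the $1$-form dual to $e_1$, and $\phi$ the $(1,1)$-tensor with $\phi e_1=0$, $\phi e_2=\pm e_3$, $\phi e_3=\mp e_2$ (all double signs correspond to the sign in $\pm 2y$). This is a contact metric manifold which is a generalized $(\kappa,\mu)$-manifold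 with $\kappa=1-\lambda^2$, $\mu=2(1\pm\lambda)$. A surface is anti-invariant if tangent to $\xi$ and $g(X,\phi Y)=0$ for tangent $X,Y$. An isometric immersion $f$ is biharmonic if $\tau_2(f)=-\Delta_f\tau(f)+\mathrm{trace}\,\tilde R(\tau(f),df)df=0$ ($\tau(f)=2H$, $H$ the mean curvature vector, $\tilde R(X,Y)=[\tilde\nabla_X,\tilde\nabla_Y]-\tilde\nabla_{[X,Y]}$), and proper biharmonic if biharmonic and not minimal. *)

From Stdlib Require Import Reals ClassicalEpsilon.
Open Scope R_scope.

(* Points / vectors in R^n are represented as functions nat -> R;
   only the components 0 .. n-1 are meaningful. *)
Definition vec := nat -> R.
Definition mat := nat -> nat -> R.

Fixpoint sumn (n : nat) (f : nat -> R) : R :=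
  match n with O => 0 | S m => sumn m f + f m end.

Definition delta (i j : nat) : R := if Nat.eqb i j then 1 else 0.

Definition Deriv (g : R -> R) (x : R) : R :=
  epsilon (inhabits 0) (fun l => derivable_pt_lim g x l).

Definition shift (p : vec) (i : nat) (t : R) : vec :=
  fun k => if Nat.eqb k i then p k + t else p k.

Definition pd (F : vec -> R) (i : nat) (p : vec) : R :=
  Deriv (fun t => F (shift p i t)) 0.

Definition mat_inv (n : nat) (M : mat) : mat :=
  epsilon (inhabits (fun _ _ => 0))
    (fun N : mat => forall i j, (i < n)%nat -> (j < n)%nat ->
        sumn n (fun k => M i k * N k j) = delta i j).

Definition metric := vec -> mat.

Definition christoffel (n : nat) (G : metric) (k i j : nat) (p : vec) : R :=
  / 2 * sumn n (fun l => mat_inv n (G p) k l *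
     (pd (fun q => G q j l) i p + pd (fun q => G q i l) j p
      - pd (fun q => G q i j) l p)).

(* Riemann curvature R(X,Y)Z = [nabla_X, nabla_Y] Z - nabla_[X,Y] Z at p *)
Definition curv (n : nat) (G : metric) (X Y Z : vec) (p : vec) : vec :=
  fun l => sumn n (fun i => sumn n (fun j => sumn n (fun k =>
    X i * Y j * Z k *
    (pd (christoffel n G l j k) i p - pd (christoffel n G l i k) j p
     + sumn n (fun m => christoffel n G l i m p * christoffel n G m j k p
                        - christoffel n G l j m p * christoffel n G m i k p))))).

Definition dphi (phi : vec -> vec) (a : nat) (u : vec) : vec :=
  fun k => pd (fun v => phi v k) a u.

Definition pullback_metric (n : nat) (G : metric) (phi : vec -> vec) : metric :=
  fun u a b => sumn n (fun i => sumn n (fun j =>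
     dphi phi a u i * G (phi u) i j * dphi phi b u j)).

Definition pull_conn (n : nat) (G : metric) (phi : vec -> vec) (a : nat)
  (V : vec -> vec) (u : vec) : vec :=
  fun k => pd (fun v => V v k) a u
    + sumn n (fun i => sumn n (fun j =>
        christoffel n G k i j (phi u) * dphi phi a u i * V u j)).

Definition tension (m n : nat) (h G : metric) (phi : vec -> vec) (u : vec) : vec :=
  fun k => sumn m (fun a => sumn m (fun b => mat_inv m (h u) a b *
     (pull_conn n G phi a (dphi phi b) u k
      - sumn m (fun c => christoffel m h c a b u * dphi phi c u k)))).

(* rough Laplacian Delta_phi V = - trace (nabla^phi nabla^phi - nabla^phi_nabla) V *)
Definition rough_lap (m n : nat) (h G : metric) (phi : vec -> vec)
  (V : vec -> vec) (u : vec) : vec :=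
  fun k => - sumn m (fun a => sumn m (fun b => mat_inv m (h u) a b *
     (pull_conn n G phi a (pull_conn n G phi b V) u k
      - sumn m (fun c => christoffel m h c a b u * pull_conn n G phi c V u k)))).

Definition bitension (m n : nat) (h G : metric) (phi : vec -> vec) (u : vec) : vec :=
  fun k => - rough_lap m n h G phi (tension m n h G phi) u k
    + sumn m (fun a => sumn m (fun b => mat_inv m (h u) a b *
        curv n G (tension m n h G phi u) (dphi phi a u) (dphi phi b u) (phi u) k)).

(* For an isometric immersion phi : R^m -> (R^n-open set, G), the domain
   carries the induced metric. *)
Definition biharmonic_imm (m n : nat) (G : metric) (phi : vec -> vec) : Prop :=
  forall u k, (k < n)%nat ->
    bitension m n (pullback_metric n G phi) G phi u k = 0.

Definition minimal_imm (m n : nat) (G : metric) (phi : vec -> vec) : Prop :=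
  forall u k, (k < n)%nat ->
    tension m n (pullback_metric n G phi) G phi u k = 0.

Definition proper_biharmonic_imm (m n : nat) (G : metric) (phi : vec -> vec) : Prop :=
  biharmonic_imm m n G phi /\ ~ minimal_imm m n G phi.

Definition is_open_interval (I : R -> Prop) : Prop :=
  (exists x, I x) /\
  (forall x y z, I x -> I z -> x <= y <= z -> I y) /\
  (forall x, I x -> exists e, 0 < e /\ forall y, Rabs (y - x) < e -> I y).

Definition smooth_on (I : R -> Prop) (g : R -> R) : Prop :=
  exists D : nat -> R -> R,
    (forall x, I x -> D O x = g x) /\
    (forall n x, I x -> derivable_pt_lim (D n) x (D (S n) x)).

Definition sgn (eps : bool) : R := if eps then 1 else -1.

(* orthonormal frame e_1, e_2, e_3 (indices 0,1,2) at p = (x,y,z) *)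
Definition frameM (lam f h : R -> R) (eps : bool) (a : nat) (p : vec) : vec :=
  match a with
  | O => fun k => match k with O => 1 | _ => 0 end
  | 1%nat => fun k => match k with 1%nat => 1 | _ => 0 end
  | _ => fun k => match k with
         | O => sgn eps * 2 * p 1%nat + f (p 2%nat)
         | 1%nat => 2 * lam (p 2%nat) * p O
                    - Deriv lam (p 2%nat) / (2 * lam (p 2%nat)) * p 1%nat
                    + h (p 2%nat)
         | _ => 1
         end
  end.

Definition metric_of_frame (e : nat -> vec -> vec) : metric :=
  fun p => epsilon (inhabits (fun _ _ => 0))
    (fun Gp : mat => forall a b, (a < 3)%nat -> (b < 3)%nat ->
       sumn 3 (fun i => sumn 3 (fun j => e a p i * Gp i j * e b p j)) = delta a b).

Definition gM (lam f h : R -> R) (eps : bool) : metric :=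
  metric_of_frame (frameM lam f h eps).

Definition f_c (c : R) : vec -> vec :=
  fun u k => match k with O => u O | 1%nat => u 1%nat | _ => c end.

(* In the coordinates (x, y, z) the metric g is the inverse Gram matrix of the
   frame e_1, e_2, e_3, so every quantity in the bitension field can be computed
   explicitly.  On the slice z = c the coordinate fields d/dx, d/dy are
   orthonormal and the induced metric is Euclidean; the tension field is
   tau = rho e_3 with rho = lambda'/(2 lambda) at c.  Computing the rough
   Laplacian of tau and the curvature term yields
     tau_2 = rho (rho' - 2 rho^2 - 4 (lambda +- 1)^2) e_3,
   and 2 lambda^2 (rho' - 2 rho^2 - 4 (lambda +- 1)^2) is the expression of the
   statement.  So f_c is non-minimal iff lambda'(c) <> 0, and then biharmonic
   iff that expression vanishes.  Only derivatives of lambda, f, h at c enter. *)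

From Stdlib Require Import Reals Lra Lia ClassicalEpsilon FunctionalExtensionality.
From Coquelicot Require Import Coquelicot.
Open Scope R_scope.

Lemma Deriv_eq g x l : derivable_pt_lim g x l -> Deriv g x = l.
Proof.
  intro H. unfold Deriv.
  pose proof (epsilon_spec (inhabits 0) (fun l => derivable_pt_lim g x l) (ex_intro _ l H)) as H2.
  exact (uniqueness_limite _ _ _ _ H2 H).
Qed.

Lemma Derive_eq g x l : derivable_pt_lim g x l -> Derive (fun y => g y) x = l.
Proof. intro H. apply is_derive_unique, is_derive_Reals, H. Qed.

Lemma pd_eq F i p l : is_derive (fun t => F (shift p i t)) 0 l -> pd F i p = l.
Proof. intro H. apply Deriv_eq, is_derive_Reals, H. Qed.

Lemma pd_ext F F' i p :
  (forall t, F (shift p i t) = F' (shift p i t)) -> pd F i p = pd F' i p.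
Proof. intro H. unfold pd. f_equal. apply functional_extensionality, H. Qed.

Lemma pd_const F i p a : (forall t, F (shift p i t) = a) -> pd F i p = 0.
Proof. intro H. rewrite (pd_ext F (fun _ => a)) by exact H. apply pd_eq. auto_derive; auto. Qed.

Lemma sumn_ext n f g : (forall k, (k < n)%nat -> f k = g k) -> sumn n f = sumn n g.
Proof.
  induction n; intros H; simpl; auto.
  rewrite IHn by (intros; apply H; lia). rewrite H by lia. reflexivity.
Qed.

Lemma sumn_scal_l n a f : sumn n (fun k => a * f k) = a * sumn n f.
Proof. induction n; simpl; [ring | rewrite IHn; ring]. Qed.

Lemma sumn_scal_r n a f : sumn n (fun k => f k * a) = sumn n f * a.
Proof. induction n; simpl; [ring | rewrite IHn; ring]. Qed.

Lemma sumn_plus n f g : sumn n (fun k => f k + g k) = sumn n f + sumn n g.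
Proof. induction n; simpl; [ring | rewrite IHn; ring]. Qed.

Lemma sumn_zero n : sumn n (fun _ => 0) = 0.
Proof. induction n; simpl; [ring | rewrite IHn; ring]. Qed.

Lemma sumn_swap n m F :
  sumn n (fun i => sumn m (fun j => F i j)) = sumn m (fun j => sumn n (fun i => F i j)).
Proof.
  induction n; simpl; [symmetry; apply sumn_zero |].
  rewrite IHn, <- sumn_plus. reflexivity.
Qed.

Lemma sumn_delta_l n i g : (i < n)%nat -> sumn n (fun k => delta i k * g k) = g i.
Proof.
  induction n; intros Hi; simpl; [lia |].
  destruct (Nat.eq_dec i n) as [-> | Hne].
  - rewrite (sumn_ext _ _ (fun _ => 0)), sumn_zero.
    + unfold delta. rewrite Nat.eqb_refl. ring.
    + intros k Hk. unfold delta. destruct (Nat.eqb_spec n k); [lia | ring].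
  - rewrite IHn by lia. unfold delta. destruct (Nat.eqb_spec i n); [lia | ring].
Qed.

Lemma sumn_delta_r n i g : (i < n)%nat -> sumn n (fun k => g k * delta k i) = g i.
Proof.
  intro Hi. rewrite <- (sumn_delta_l n i g Hi). apply sumn_ext. intros k _. unfold delta.
  destruct (Nat.eqb_spec k i), (Nat.eqb_spec i k); subst; try lia; ring.
Qed.

Lemma mat_inv_eq n M L :
  (forall i j, (i < n)%nat -> (j < n)%nat -> sumn n (fun k => L i k * M k j) = delta i j) ->
  (forall i j, (i < n)%nat -> (j < n)%nat -> sumn n (fun k => M i k * L k j) = delta i j) ->
  forall i j, (i < n)%nat -> (j < n)%nat -> mat_inv n M i j = L i j.
Proof.
  intros HL HR.
  pose proof (epsilon_spec (inhabits (fun _ _ => 0))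
    (fun N : mat => forall i j, (i < n)%nat -> (j < n)%nat ->
        sumn n (fun k => M i k * N k j) = delta i j) (ex_intro _ L HR)) as HN.
  fold (mat_inv n M) in HN. set (N := mat_inv n M) in *.
  intros i j Hi Hj.
  rewrite <- (sumn_delta_r n j (fun k => L i k) Hj).
  rewrite (sumn_ext _ _ (fun k => sumn n (fun l => L i k * (M k l * N l j)))).
  2:{ intros k Hk. rewrite <- HN by auto. rewrite sumn_scal_l. reflexivity. }
  rewrite sumn_swap.
  rewrite (sumn_ext _ _ (fun l => delta i l * N l j)).
  2:{ intros l Hl. rewrite <- HL by auto. rewrite <- sumn_scal_r.
      apply sumn_ext. intros; ring. }
  symmetry. apply (sumn_delta_l n i (fun l => N l j)), Hi.
Qed.

Lemma derivable_pt_lim_interval_ext (I : R -> Prop) g k x l :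
  is_open_interval I -> I x -> (forall y, I y -> k y = g y) ->
  derivable_pt_lim k x l -> derivable_pt_lim g x l.
Proof.
  intros [_ [_ Hopen]] Hx Heq Hd.
  destruct (Hopen x Hx) as [e [He Hball]].
  apply is_derive_Reals, (is_derive_ext_loc k).
  - exists (mkposreal e He). intros y Hy. apply Heq, Hball, Hy.
  - apply is_derive_Reals, Hd.
Qed.

Lemma smooth_on_derivatives (I : R -> Prop) g x :
  is_open_interval I -> smooth_on I g -> I x ->
  exists D : nat -> R -> R,
    (forall y, I y -> derivable_pt_lim g y (D 1%nat y)) /\
    derivable_pt_lim (D 1%nat) x (D 2%nat x).
Proof.
  intros HI [D [H0 HS]] Hx. exists D. split; [| apply HS, Hx].
  intros y Hy. apply (derivable_pt_lim_interval_ext I g (D O) y); auto.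
Qed.

Ltac destr3 i := destruct i as [|[|[|i]]]; [| | | exfalso; lia].

Section Slice.

Variables (lam f h : R -> R) (eps : bool) (c : R).

Notation G := (gM lam f h eps).

Definition e3x (p : vec) : R := sgn eps * 2 * p 1%nat + f (p 2%nat).
Definition e3y (p : vec) : R :=
  2 * lam (p 2%nat) * p O - Deriv lam (p 2%nat) / (2 * lam (p 2%nat)) * p 1%nat + h (p 2%nat).

Definition gM_mat (p : vec) (i j : nat) : R :=
  match i, j with
  | 0%nat, 0%nat => 1 | 0%nat, 1%nat => 0 | 0%nat, 2%nat => - e3x p
  | 1%nat, 0%nat => 0 | 1%nat, 1%nat => 1 | 1%nat, 2%nat => - e3y p
  | 2%nat, 0%nat => - e3x p | 2%nat, 1%nat => - e3y p
  | 2%nat, 2%nat => 1 + e3x p ^ 2 + e3y p ^ 2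
  | _, _ => 0 end.

(* [sum_a e_a e_a^T], the inverse of the Gram condition defining [gM]. *)
Definition gM_inv (p : vec) (i j : nat) : R :=
  match i, j with
  | 0%nat, 0%nat => 1 + e3x p ^ 2 | 0%nat, 1%nat => e3x p * e3y p | 0%nat, 2%nat => e3x p
  | 1%nat, 0%nat => e3x p * e3y p | 1%nat, 1%nat => 1 + e3y p ^ 2 | 1%nat, 2%nat => e3y p
  | 2%nat, 0%nat => e3x p | 2%nat, 1%nat => e3y p | 2%nat, 2%nat => 1
  | _, _ => 0 end.

Lemma gM_eq p i j : (i < 3)%nat -> (j < 3)%nat -> G p i j = gM_mat p i j.
Proof.
  unfold gM, metric_of_frame.
  set (P := fun Gp : mat => forall a b, (a < 3)%nat -> (b < 3)%nat ->
       sumn 3 (fun i => sumn 3 (fun j =>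
         frameM lam f h eps a p i * Gp i j * frameM lam f h eps b p j)) = delta a b).
  assert (HG : P (gM_mat p)).
  { intros a b Ha Hb. destr3 a; destr3 b; cbn; unfold e3x, e3y; ring. }
  pose proof (epsilon_spec (inhabits (fun _ _ => 0)) P (ex_intro _ _ HG)) as HQ.
  set (Q := epsilon (inhabits (fun _ _ => 0)) P) in *.
  pose proof (HQ 0%nat 0%nat ltac:(lia) ltac:(lia)) as e00.
  pose proof (HQ 0%nat 1%nat ltac:(lia) ltac:(lia)) as e01.
  pose proof (HQ 0%nat 2%nat ltac:(lia) ltac:(lia)) as e02.
  pose proof (HQ 1%nat 0%nat ltac:(lia) ltac:(lia)) as e10.
  pose proof (HQ 1%nat 1%nat ltac:(lia) ltac:(lia)) as e11.
  pose proof (HQ 1%nat 2%nat ltac:(lia) ltac:(lia)) as e12.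
  pose proof (HQ 2%nat 0%nat ltac:(lia) ltac:(lia)) as e20.
  pose proof (HQ 2%nat 1%nat ltac:(lia) ltac:(lia)) as e21.
  pose proof (HQ 2%nat 2%nat ltac:(lia) ltac:(lia)) as e22.
  clear HQ HG. cbn in e00, e01, e02, e10, e11, e12, e20, e21, e22.
  fold (e3x p) (e3y p) in *. set (A := e3x p) in *. set (B := e3y p) in *.
  assert (q00 : Q 0%nat 0%nat = 1) by lra.
  assert (q01 : Q 0%nat 1%nat = 0) by lra.
  assert (q10 : Q 1%nat 0%nat = 0) by lra.
  assert (q11 : Q 1%nat 1%nat = 1) by lra.
  rewrite q00, q01 in e02. rewrite q10, q11 in e12.
  rewrite q00, q10 in e20. rewrite q01, q11 in e21.
  assert (q02 : Q 0%nat 2%nat = - A) by lra.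
  assert (q12 : Q 1%nat 2%nat = - B) by lra.
  assert (q20 : Q 2%nat 0%nat = - A) by lra.
  assert (q21 : Q 2%nat 1%nat = - B) by lra.
  rewrite q00, q01, q02, q10, q11, q12, q20, q21 in e22.
  assert (q22 : Q 2%nat 2%nat = 1 + A ^ 2 + B ^ 2) by nra.
  intros Hi Hj. destr3 i; destr3 j; cbn; fold A B; auto.
Qed.

Lemma mat_inv_gM p k l : (k < 3)%nat -> (l < 3)%nat -> mat_inv 3 (G p) k l = gM_inv p k l.
Proof.
  apply mat_inv_eq; intros i j Hi Hj.
  - rewrite (sumn_ext _ _ (fun k => gM_inv p i k * gM_mat p k j)) by (intros; rewrite gM_eq; auto).
    destr3 i; destr3 j; cbn; unfold delta; simpl; ring.
  - rewrite (sumn_ext _ _ (fun k => gM_mat p i k * gM_inv p k j)) by (intros; rewrite gM_eq; auto).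
    destr3 i; destr3 j; cbn; unfold delta; simpl; ring.
Qed.

Lemma dphi_f_c u a i : (a < 2)%nat -> dphi (f_c c) a u i = delta a i.
Proof.
  intro Ha. unfold dphi. apply pd_eq.
  destruct a as [|[|a]]; [| | lia]; destruct i as [|[|i]]; cbn; unfold delta; simpl;
  auto_derive; auto; ring.
Qed.

Lemma dphi_f_c_fun a u : (a < 2)%nat -> dphi (f_c c) a u = fun k => delta a k.
Proof. intro. apply functional_extensionality. intro. apply dphi_f_c. auto. Qed.

Lemma pullback_f_c u a b : (a < 2)%nat -> (b < 2)%nat ->
  pullback_metric 3 G (f_c c) u a b = delta a b.
Proof.
  intros Ha Hb. unfold pullback_metric.
  rewrite (sumn_ext _ _ (fun i => sumn 3 (fun j => delta a i * gM_mat (f_c c u) i j * delta b j))).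
  2:{ intros i Hi. apply sumn_ext. intros j Hj. rewrite !dphi_f_c, gM_eq; auto. }
  destruct a as [|[|a]]; try lia; destruct b as [|[|b]]; try lia; cbn; unfold delta; simpl; ring.
Qed.

Lemma mat_inv_pullback_f_c u a b : (a < 2)%nat -> (b < 2)%nat ->
  mat_inv 2 (pullback_metric 3 G (f_c c) u) a b = delta a b.
Proof.
  apply mat_inv_eq; intros i j Hi Hj;
    rewrite (sumn_ext _ _ (fun k => delta i k * delta k j))
      by (intros k Hk; rewrite pullback_f_c by auto; reflexivity);
    apply (sumn_delta_l 2 i (fun k => delta k j)), Hi.
Qed.

Lemma christoffel_pullback_f_c k a b u : (k < 2)%nat -> (a < 2)%nat -> (b < 2)%nat ->
  christoffel 2 (pullback_metric 3 G (f_c c)) k a b u = 0.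
Proof.
  intros. unfold christoffel.
  rewrite (sumn_ext _ _ (fun _ => 0)); [rewrite sumn_zero; ring |].
  intros l Hl.
  rewrite (pd_const _ _ _ (delta b l)) by (intros; apply pullback_f_c; auto).
  rewrite (pd_const _ _ _ (delta a l)) by (intros; apply pullback_f_c; auto).
  rewrite (pd_const _ _ _ (delta a b)) by (intros; apply pullback_f_c; auto).
  ring.
Qed.

Variables (f1 l1 l2 h1 : R).
Hypothesis Hf : derivable_pt_lim f c f1.
Hypothesis Hl : derivable_pt_lim lam c l1.
Hypothesis Hl2 : derivable_pt_lim (Deriv lam) c l2.
Hypothesis Hh : derivable_pt_lim h c h1.
Hypothesis Hlc : lam c <> 0.

Definition rho (z : R) : R := Deriv lam z / (2 * lam z).
Definition rho1 : R := (l2 * lam c - l1 * l1) / (2 * lam c ^ 2).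

(* Partial derivatives d/dx^l of e3x, e3y and of the metric.  The z-derivatives
   ([l = 2]) use the derivatives of lambda, f, h at c, so they are correct only
   on the slice z = c. *)
Definition d_e3x (l : nat) (p : vec) : R :=
  match l with O => 0 | 1%nat => sgn eps * 2 | _ => f1 end.
Definition d_e3y (l : nat) (p : vec) : R :=
  match l with O => 2 * lam (p 2%nat) | 1%nat => - rho (p 2%nat)
  | _ => 2 * l1 * p O - rho1 * p 1%nat + h1 end.
Definition dd_e3y (a l : nat) : R :=
  match a, l with
  | 0%nat, 2%nat | 2%nat, 0%nat => 2 * l1
  | 1%nat, 2%nat | 2%nat, 1%nat => - rho1
  | _, _ => 0 end.
Definition d_gM (l i j : nat) (p : vec) : R :=
  match i, j with
  | 0%nat, 2%nat | 2%nat, 0%nat => - d_e3x l p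
  | 1%nat, 2%nat | 2%nat, 1%nat => - d_e3y l p
  | 2%nat, 2%nat => 2 * e3x p * d_e3x l p + 2 * e3y p * d_e3y l p
  | _, _ => 0 end.

Lemma Deriv_lam_c : Deriv lam c = l1.
Proof. apply Deriv_eq, Hl. Qed.

Ltac derive_side := repeat split; rewrite ?Rplus_0_r;
  try (eexists; apply is_derive_Reals; eassumption);
  try (intro; apply Hlc; lra); auto.

Ltac derive_value := rewrite ?Rplus_0_r;
  rewrite ?(Derive_eq _ _ _ Hf), ?(Derive_eq _ _ _ Hl), ?(Derive_eq _ _ _ Hl2),
    ?(Derive_eq _ _ _ Hh), ?Deriv_lam_c;
  unfold rho1; field; auto.

Lemma pd_gM l i j p : (l < 3)%nat -> (i < 3)%nat -> (j < 3)%nat ->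
  ((l < 2)%nat \/ p 2%nat = c \/ ((i < 2)%nat /\ (j < 2)%nat)) ->
  pd (fun q => G q i j) l p = d_gM l i j p.
Proof.
  intros Hl3 Hi Hj H.
  rewrite (pd_ext _ (fun q => gM_mat q i j)) by (intros; apply gM_eq; auto).
  apply pd_eq.
  destr3 l; destr3 i; destr3 j; unfold gM_mat, d_gM, d_e3x, d_e3y, rho, e3x, e3y, shift; cbn;
  try (assert (Hp : p 2%nat = c) by (destruct H as [?|[?|[? ?]]]; [lia|auto|lia]); rewrite Hp);
  try (generalize (Deriv lam (p 2%nat) / (2 * lam (p 2%nat))); intro);
  auto_derive; derive_side; derive_value.
Qed.

Definition Gamma (k i j : nat) (p : vec) : R :=
  / 2 * sumn 3 (fun l => gM_inv p k l * (d_gM i j l p + d_gM j i l p - d_gM l i j p)).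

Definition d_gM_inv (a : nat) (p : vec) (k l : nat) : R :=
  match k, l with
  | 0%nat, 0%nat => 2 * e3x p * d_e3x a p
  | 0%nat, 1%nat | 1%nat, 0%nat => d_e3x a p * e3y p + e3x p * d_e3y a p
  | 0%nat, 2%nat | 2%nat, 0%nat => d_e3x a p
  | 1%nat, 1%nat => 2 * e3y p * d_e3y a p
  | 1%nat, 2%nat | 2%nat, 1%nat => d_e3y a p
  | _, _ => 0 end.

Definition dd_gM (a l i j : nat) (p : vec) : R :=
  match i, j with
  | 1%nat, 2%nat | 2%nat, 1%nat => - dd_e3y a l
  | 2%nat, 2%nat => 2 * (d_e3x a p * d_e3x l p) + 2 * (d_e3y a p * d_e3y l p + e3y p * dd_e3y a l)
  | _, _ => 0 end.

Definition d_Gamma (a k i j : nat) (p : vec) : R :=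
  / 2 * sumn 3 (fun l => d_gM_inv a p k l * (d_gM i j l p + d_gM j i l p - d_gM l i j p)
                        + gM_inv p k l * (dd_gM a i j l p + dd_gM a j i l p - dd_gM a l i j p)).

Lemma christoffel_eq k i j p : (k < 3)%nat -> (i < 3)%nat -> (j < 3)%nat ->
  (p 2%nat = c \/ ((i < 2)%nat /\ (j < 2)%nat)) ->
  christoffel 3 G k i j p = Gamma k i j p.
Proof.
  intros Hk Hi Hj H. unfold christoffel, Gamma. f_equal. apply sumn_ext. intros l Hl3.
  rewrite mat_inv_gM by auto.
  rewrite !pd_gM by (auto; destruct H as [? | [? ?]]; auto).
  reflexivity.
Qed.

Lemma is_derive_Gamma a k i j p : (a < 3)%nat -> (k < 3)%nat -> (i < 3)%nat -> (j < 3)%nat ->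
  p 2%nat = c -> ((a < 2)%nat \/ ((i < 2)%nat /\ (j < 2)%nat)) ->
  is_derive (fun t => Gamma k i j (shift p a t)) 0 (d_Gamma a k i j p).
Proof.
  intros Ha Hk Hi Hj Hp H.
  unfold Gamma, d_Gamma, d_gM_inv, dd_gM, gM_inv, d_gM, d_e3x, d_e3y, dd_e3y, rho, e3x, e3y, shift.
  destr3 a; [ | | destruct H as [H|[H1 H2]]; [lia|] ];
  destr3 k; destr3 i; try lia; destr3 j; try lia; cbn; rewrite Hp;
  [ try (generalize (Deriv lam c / (2 * lam c)); intro) .. | | | | | | | | | | | |];
  auto_derive; derive_side; derive_value.
Qed.

Lemma pd_Gamma a k i j p : (a < 3)%nat -> (k < 3)%nat -> (i < 3)%nat -> (j < 3)%nat ->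
  p 2%nat = c -> ((a < 2)%nat \/ ((i < 2)%nat /\ (j < 2)%nat)) ->
  pd (Gamma k i j) a p = d_Gamma a k i j p.
Proof. intros. apply pd_eq, is_derive_Gamma; auto. Qed.

Notation tau := (tension 2 3 (pullback_metric 3 G (f_c c)) G (f_c c)).

Definition tension_slice (u : vec) (k : nat) : R :=
  Gamma k 0%nat 0%nat (f_c c u) + Gamma k 1%nat 1%nat (f_c c u).

Lemma pd_dphi_f_c b k a u : (b < 2)%nat -> pd (fun v => dphi (f_c c) b v k) a u = 0.
Proof. intro. apply (pd_const _ _ _ (delta b k)). intros. apply dphi_f_c. auto. Qed.

Lemma tension_eq u k : (k < 3)%nat -> tau u k = tension_slice u k.
Proof.
  intros Hk. unfold tension. cbn [sumn].
  rewrite !mat_inv_pullback_f_c, !christoffel_pullback_f_c by lia.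
  unfold pull_conn. rewrite !pd_dphi_f_c by lia. cbn [sumn]. rewrite !dphi_f_c by lia.
  rewrite !christoffel_eq by (try lia; left; reflexivity).
  unfold tension_slice, delta; simpl. ring.
Qed.

Lemma f_c_shift a v t : (a < 2)%nat -> f_c c (shift v a t) = shift (f_c c v) a t.
Proof.
  intro Ha. apply functional_extensionality. intro k.
  destruct a as [|[|a]]; try lia; destruct k as [|[|k]]; unfold shift, f_c; cbn; auto.
Qed.

Lemma pd_tension_slice a v k : (a < 2)%nat -> (k < 3)%nat ->
  pd (fun w => tension_slice w k) a v
  = d_Gamma a k 0%nat 0%nat (f_c c v) + d_Gamma a k 1%nat 1%nat (f_c c v).
Proof.
  intros Ha Hk. apply pd_eq. unfold tension_slice.
  apply (is_derive_ext (fun t => Gamma k 0%nat 0%nat (shift (f_c c v) a t)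
                                 + Gamma k 1%nat 1%nat (shift (f_c c v) a t))).
  { intro t. rewrite f_c_shift; auto. }
  apply is_derive_Reals.
  apply (derivable_pt_lim_plus (fun t => Gamma k 0%nat 0%nat (shift (f_c c v) a t)));
    apply is_derive_Reals, is_derive_Gamma; auto; lia.
Qed.

(* [sigma ^ 2 = (1 +- lam c) ^ 2] because [sgn eps ^ 2 = 1]. *)
Definition sigma : R := lam c + sgn eps.

Definition conn_tension (a k : nat) : R :=
  match a, k with
  | 0%nat, 1%nat | 1%nat, 0%nat => rho c * sigma
  | 1%nat, 1%nat => - rho c ^ 2
  | _, _ => 0 end.

Ltac expand_slice :=
  unfold conn_tension, sigma, Gamma, d_Gamma, d_gM_inv, dd_gM, gM_inv, d_gM,
    d_e3x, d_e3y, dd_e3y, rho, rho1, e3x, e3y, f_c; cbn;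
  rewrite Deriv_lam_c.

Lemma pull_conn_tension a v k : (a < 2)%nat -> (k < 3)%nat ->
  pull_conn 3 G (f_c c) a tau v k = conn_tension a k.
Proof.
  intros Ha Hk. unfold pull_conn.
  rewrite (pd_ext _ (fun w => tension_slice w k)) by (intros; apply tension_eq; auto).
  rewrite pd_tension_slice by auto. cbn [sumn].
  rewrite !tension_eq, !dphi_f_c by lia.
  rewrite !christoffel_eq by (try lia; left; reflexivity).
  unfold tension_slice, delta; simpl.
  destruct a as [|[|a]]; try lia; destr3 k; expand_slice; destruct eps; cbn [sgn]; field; auto.
Qed.

Lemma pull_conn2_tension a b u k : (a < 2)%nat -> (b < 2)%nat -> (k < 3)%nat ->
  pull_conn 3 G (f_c c) a (pull_conn 3 G (f_c c) b tau) u k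
  = sumn 3 (fun j => Gamma k a j (f_c c u) * conn_tension b j).
Proof.
  intros Ha Hb Hk. unfold pull_conn at 1.
  rewrite (pd_const _ _ _ (conn_tension b k)) by (intros; apply pull_conn_tension; auto).
  cbn [sumn]. rewrite !pull_conn_tension, !dphi_f_c by lia.
  rewrite !christoffel_eq by (try lia; left; reflexivity).
  destruct a as [|[|a]]; try lia; unfold delta; cbn; ring.
Qed.

Lemma rough_lap_tension u k : (k < 3)%nat ->
  rough_lap 2 3 (pullback_metric 3 G (f_c c)) G (f_c c) tau u k
  = rho c * (2 * sigma ^ 2 + rho c ^ 2) * gM_inv (f_c c u) k 2%nat.
Proof.
  intros Hk. unfold rough_lap. cbn [sumn].
  rewrite !mat_inv_pullback_f_c, !christoffel_pullback_f_c, !pull_conn2_tension by lia.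
  unfold delta; cbn [Nat.eqb].
  destr3 k; expand_slice; destruct eps; cbn [sgn]; field; auto.
Qed.

Definition curv_diag (X : vec) (a : nat) (p : vec) (l : nat) : R :=
  sumn 3 (fun i => X i * (pd (christoffel 3 G l a a) i p - pd (christoffel 3 G l i a) a p
    + sumn 3 (fun m => christoffel 3 G l i m p * christoffel 3 G m a a p
                      - christoffel 3 G l a m p * christoffel 3 G m i a p))).

Lemma curv_delta X a p l : (a < 2)%nat ->
  curv 3 G X (fun k => delta a k) (fun k => delta a k) p l = curv_diag X a p l.
Proof.
  intro Ha. unfold curv, curv_diag. destruct a as [|[|a]]; try lia; unfold delta; cbn; ring.
Qed.

Lemma pd_christoffel_xy a l i j p : (a < 2)%nat -> p 2%nat = c ->
  (l < 3)%nat -> (i < 3)%nat -> (j < 3)%nat ->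
  pd (christoffel 3 G l i j) a p = d_Gamma a l i j p.
Proof.
  intros Ha Hp Hl3 Hi Hj. rewrite (pd_ext _ (Gamma l i j)); [apply pd_Gamma; auto; lia |].
  intro t. apply christoffel_eq; try lia. left.
  destruct a as [|[|a]]; [| | lia]; exact Hp.
Qed.

Lemma pd_christoffel_z l a p : p 2%nat = c -> (l < 3)%nat -> (a < 2)%nat ->
  pd (christoffel 3 G l a a) 2%nat p = d_Gamma 2%nat l a a p.
Proof.
  intros Hp Hl3 Ha. rewrite (pd_ext _ (Gamma l a a)); [apply pd_Gamma; auto; lia |].
  intro t. apply christoffel_eq; auto; lia.
Qed.

Definition vec3 (x y z : R) (k : nat) : R :=
  match k with O => x | 1%nat => y | _ => z end.

(* Closed forms of [Gamma^k_ij], of its x/y-derivatives and of its z-derivative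
   on the slice, as polynomials in the values [A = e3x], [B = e3y],
   [L = lam c], [s = sgn eps], [m = rho c], ..., so that the curvature term
   reduces to a single [field] computation. *)
Definition Gamma_cf (A B L s m F1 Bz : R) (i j : nat) : nat -> R :=
  let P := L + s in let Q := s - L in
  match i, j with
  | O, O => vec3 0 0 0
  | O, 1%nat | 1%nat, O => vec3 (-P*A) (-P*B) (-P)
  | 1%nat, 1%nat => vec3 (m*A) (m*B) m
  | O, 2%nat | 2%nat, O => vec3 (B*P*A) (Q + B*P*B) (B*P)
  | 1%nat, 2%nat | 2%nat, 1%nat => let K := A*P - B*m in vec3 (-Q + K*A) (K*B) K
  | _, _ => let al := -B*P - F1 + B*Q in let be := -A*P + B*m - A*Q - Bz in
            let ga := -2*A*B*P + B*B*m in vec3 (al + ga*A) (be + ga*B) ga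
  end.

Definition d_Gamma_cf (A B L s m Aa Ba : R) (i j : nat) : nat -> R :=
  let P := L + s in
  match i, j with
  | O, 1%nat | 1%nat, O => vec3 (-P*Aa) (-P*Ba) 0
  | 1%nat, 1%nat => vec3 (m*Aa) (m*Ba) 0
  | O, 2%nat | 2%nat, O => vec3 (P*(Ba*A + B*Aa)) (2*P*B*Ba) (P*Ba)
  | 1%nat, 2%nat | 2%nat, 1%nat => let K := A*P - B*m in let Ka := Aa*P - Ba*m in
        vec3 (Ka*A + K*Aa) (Ka*B + K*Ba) Ka
  | _, _ => vec3 0 0 0
  end.

Definition dz_Gamma_cf (A B m m1 F1 Bz : R) (j : nat) : nat -> R :=
  match j with O => vec3 0 0 0 | _ => vec3 (m1*A + m*F1) (m1*B + m*Bz) m1 end.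

Definition e3x_c (u : vec) : R := e3x (f_c c u).
Definition e3y_c (u : vec) : R := e3y (f_c c u).
Definition dz_e3y_c (u : vec) : R := d_e3y 2%nat (f_c c u).
Definition d_e3x_c (a : nat) : R := match a with O => 0 | _ => 2 * sgn eps end.
Definition d_e3y_c (a : nat) : R := match a with O => 2 * lam c | _ => - rho c end.

Ltac expand_closed_form :=
  unfold Gamma_cf, d_Gamma_cf, dz_Gamma_cf, vec3, e3x_c, e3y_c, dz_e3y_c, d_e3x_c, d_e3y_c,
    Gamma, d_Gamma, d_gM_inv, dd_gM, gM_inv, d_gM, d_e3x, d_e3y, dd_e3y, rho, e3x, e3y, f_c; cbn;
  generalize (Deriv lam c / (2 * lam c)); intro m; generalize rho1; intro m1.

Lemma Gamma_closed k i j u : (k < 3)%nat -> (i < 3)%nat -> (j < 3)%nat ->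
  Gamma k i j (f_c c u)
  = Gamma_cf (e3x_c u) (e3y_c u) (lam c) (sgn eps) (rho c) f1 (dz_e3y_c u) i j k.
Proof. intros. destr3 k; destr3 i; destr3 j; expand_closed_form; field. Qed.

Lemma d_Gamma_closed a k i j u : (a < 2)%nat -> (k < 3)%nat -> (i < 3)%nat -> (j < 2)%nat ->
  d_Gamma a k i j (f_c c u)
  = d_Gamma_cf (e3x_c u) (e3y_c u) (lam c) (sgn eps) (rho c) (d_e3x_c a) (d_e3y_c a) i j k.
Proof.
  intros. destruct a as [|[|a]]; try lia; destr3 k; destr3 i; destruct j as [|[|j]]; try lia;
  expand_closed_form; field.
Qed.

Lemma dz_Gamma_closed k j u : (k < 3)%nat -> (j < 2)%nat ->
  d_Gamma 2%nat k j j (f_c c u) = dz_Gamma_cf (e3x_c u) (e3y_c u) (rho c) rho1 f1 (dz_e3y_c u) j k.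
Proof. intros. destr3 k; destruct j as [|[|j]]; try lia; expand_closed_form; field. Qed.

Lemma gM_inv_e3 u k : (k < 3)%nat -> gM_inv (f_c c u) k 2%nat = vec3 (e3x_c u) (e3y_c u) 1 k.
Proof. intros. destr3 k; reflexivity. Qed.

Lemma curvature_term u k : (k < 3)%nat ->
  sumn 2 (fun a => sumn 2 (fun b => mat_inv 2 (pullback_metric 3 G (f_c c) u) a b *
        curv 3 G (tau u) (dphi (f_c c) a u) (dphi (f_c c) b u) (f_c c u) k))
  = rho c * (rho1 - rho c ^ 2 - 2 * sigma ^ 2) * gM_inv (f_c c u) k 2%nat.
Proof.
  intros Hk. cbn [sumn].
  rewrite !mat_inv_pullback_f_c, !dphi_f_c_fun, !curv_delta by lia.
  unfold curv_diag. cbn [sumn].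
  rewrite !tension_eq by lia.
  rewrite !(pd_christoffel_xy 0%nat), !(pd_christoffel_xy 1%nat),
    !pd_christoffel_z by (try lia; reflexivity).
  rewrite !christoffel_eq by (try lia; left; reflexivity).
  unfold tension_slice.
  rewrite !Gamma_closed, !dz_Gamma_closed, !d_Gamma_closed, gM_inv_e3 by lia.
  unfold delta; cbn [Nat.eqb].
  unfold Gamma_cf, d_Gamma_cf, dz_Gamma_cf, vec3, d_e3x_c, d_e3y_c, sigma.
  generalize (e3x_c u) (e3y_c u) (dz_e3y_c u) (rho c) rho1 (lam c).
  intros A B Bz m m1 L.
  destr3 k; destruct eps; cbn [sgn]; field.
Qed.

Lemma tension_e3 u k : (k < 3)%nat -> tau u k = rho c * gM_inv (f_c c u) k 2%nat.
Proof.
  intros Hk. rewrite tension_eq by auto. unfold tension_slice.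
  rewrite !Gamma_closed, gM_inv_e3 by lia.
  destr3 k; unfold Gamma_cf, vec3; cbn; ring.
Qed.

Lemma bitension_e3 u k : (k < 3)%nat ->
  bitension 2 3 (pullback_metric 3 G (f_c c)) G (f_c c) u k
  = rho c * (rho1 - 2 * rho c ^ 2 - 4 * sigma ^ 2) * gM_inv (f_c c u) k 2%nat.
Proof.
  intros Hk. unfold bitension. rewrite rough_lap_tension, curvature_term by auto. ring.
Qed.

Lemma vanishes_along_e3_iff a :
  (forall u k, (k < 3)%nat -> a * gM_inv (f_c c u) k 2%nat = 0) <-> a = 0.
Proof.
  split.
  - intro H. specialize (H (fun _ => 0) 2%nat ltac:(lia)).
    rewrite gM_inv_e3 in H by lia. cbn in H. lra.
  - intros -> u k _. ring.
Qed.

Lemma minimal_f_c_iff : minimal_imm 2 3 G (f_c c) <-> rho c = 0.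
Proof.
  rewrite <- vanishes_along_e3_iff. unfold minimal_imm.
  split; intros H u k Hk; specialize (H u k Hk); rewrite tension_e3 in *; auto.
Qed.

Lemma biharmonic_f_c_iff :
  biharmonic_imm 2 3 G (f_c c) <-> rho c * (rho1 - 2 * rho c ^ 2 - 4 * sigma ^ 2) = 0.
Proof.
  rewrite <- vanishes_along_e3_iff. unfold biharmonic_imm.
  split; intros H u k Hk; specialize (H u k Hk); rewrite bitension_e3 in *; auto.
Qed.

Lemma rho_c_eq : rho c = l1 / (2 * lam c).
Proof. unfold rho. rewrite Deriv_lam_c. reflexivity. Qed.

Lemma bitension_factor_eq :
  (rho1 - 2 * rho c ^ 2 - 4 * sigma ^ 2) * (2 * lam c ^ 2)
  = lam c * l2 - 2 * l1 ^ 2 - 8 * lam c ^ 2 * (1 + sgn eps * lam c) ^ 2.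
Proof. unfold rho1, sigma. rewrite rho_c_eq. destruct eps; cbn [sgn]; field; auto. Qed.

Lemma proper_biharmonic_f_c_iff :
  proper_biharmonic_imm 2 3 G (f_c c) <->
  (l1 <> 0 /\ lam c * l2 - 2 * l1 ^ 2 - 8 * lam c ^ 2 * (1 + sgn eps * lam c) ^ 2 = 0).
Proof.
  unfold proper_biharmonic_imm.
  rewrite biharmonic_f_c_iff, minimal_f_c_iff, <- bitension_factor_eq, rho_c_eq.
  assert (Hl2c : 2 * lam c <> 0) by lra.
  assert (Hsq : 2 * lam c ^ 2 <> 0)
    by (apply Rmult_integral_contrapositive; split; [lra | apply pow_nonzero, Hlc]).
  set (X := rho1 - _ - _). split.
  - intros [Hb Hm]. assert (Hl1 : l1 <> 0) by (intro E; apply Hm; rewrite E; field; exact Hlc).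
    split; [exact Hl1 |].
    apply Rmult_integral in Hb as [Hb | Hb]; [| rewrite Hb; ring].
    exfalso. apply Hm, Hb.
  - intros [Hl1 HX]. split.
    + apply Rmult_integral in HX as [HX | HX]; [rewrite HX; ring | contradiction].
    + intro E. apply Hl1. apply (Rmult_eq_reg_r (/ (2 * lam c))); [| apply Rinv_neq_0_compat, Hl2c].
      rewrite Rmult_0_l. exact E.
Qed.

End Slice.

Theorem proposition6p3 (I : R -> Prop) (lam f h : R -> R) (eps : bool) (c : R) :
  is_open_interval I ->
  smooth_on I lam ->
  (forall z, I z -> 0 < lam z) ->
  (exists z1 z2, I z1 /\ I z2 /\ lam z1 <> lam z2) ->
  smooth_on I f ->
  smooth_on I h ->
  I c ->
  (proper_biharmonic_imm 2 3 (gM lam f h eps) (f_c c) <->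
   (Deriv lam c <> 0 /\
    lam c * Deriv (Deriv lam) c - 2 * (Deriv lam c) ^ 2
      - 8 * (lam c) ^ 2 * (1 + sgn eps * lam c) ^ 2 = 0)).
Proof.
  intros HI Hsl Hpos _ Hsf Hsh Hc.
  destruct (smooth_on_derivatives I lam c HI Hsl Hc) as [Dl [Hl Hl2]].
  destruct (smooth_on_derivatives I f c HI Hsf Hc) as [Df [Hf _]].
  destruct (smooth_on_derivatives I h c HI Hsh Hc) as [Dh [Hh _]].
  assert (HDl : derivable_pt_lim (Deriv lam) c (Dl 2%nat c)).
  { apply (derivable_pt_lim_interval_ext I (Deriv lam) (Dl 1%nat) c); auto.
    intros y Hy. symmetry. apply Deriv_eq, Hl, Hy. }
  rewrite (Deriv_eq _ _ _ (Hl c Hc)), (Deriv_eq _ _ _ HDl).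
  apply (proper_biharmonic_f_c_iff lam f h eps c _ _ _ _ (Hf c Hc) (Hl c Hc) HDl (Hh c Hc)).
  specialize (Hpos c Hc). lra.
Qed.
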